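(* Let $\mathcal{H}$ be a finite set of hypotheses, $\mathcal{T}$ a finite set of tests, $\mathcal{O}$ a finite set of outcomes, each $h\in\mathcal{H}$ a function $h:\mathcal{T}\to\mathcal{O}$, and $\mathcal{R}$ a finite nonempty collection of decision regions $r\subseteq\mathcal{H}$ with $\bigcup_{r\in\mathcal{R}} r=\mathcal{H}$. Let $\mathcal{G}$ be the set of subregions, let $$k=\min\Big(\max_{h\in\mathcal{H}}|\{r\in\mathcal{R}: h\in r\}|,\ \max_{r\in\mathcal{R}}|\{g\in\mathcal{G}: g\subseteq r\}|\Big)+1,$$ and let $\mathcal{E}$ be the set of all multisets $e$ of exactly $k$ subregions (repetitions allowed) such that there is no $r\in\mathcal{R}$ with $g\subseteq r$ for every $g\in e$. For a set of test–outcome pairs $\mathcal{S}\subseteq\mathcal{T}\times\mathcal{O}$, let $\mathcal{V}(\mathcal{S})=\{h\in\mathcal{H}: h(t)=o \text{ for all }(t,o)\in\mathcal{S}\}$ and let $\mathcal{E}(\mathcal{S})$ be the set of hyperedges $e\in\mathcal{E}$ such that every subregion $g\in e$ contains at least one hypothesis of $\mathcal{V}(\mathcal{S})$. Then for every $\mathcal{S}\subseteq\mathcal{T}\times\mathcal{O}$, $$\mathcal{E}(\mathcal{S})=\emptyset \iff \exists\, r\in\mathcal{R}:\ \mathcal{V}(\mathcal{S})\subseteq r.$$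
   Context: Subregions: hypotheses $h,h'$ are grouped into the same subregion iff they belong to exactly the same decision regions (for all $r\in\mathcal{R}$: $h\in r\Leftrightarrow h'\in r$); $\mathcal{G}$ is the set of these equivalence classes, and for $g\in\mathcal{G}$, $r\in\mathcal{R}$ we write $g\subseteq r$ if every hypothesis of $g$ lies in $r$. The hyperedges $\mathcal{E}$ form the ''splitting hypergraph'' on the node set $\mathcal{G}$; a hyperedge is ''cut'' by evidence $\mathcal{S}$ when it is not in $\mathcal{E}(\mathcal{S})$. *)

From mathcomp Require Import all_boot.
Set Implicit Arguments. Unset Strict Implicit. Unset Printing Implicit Defensive.

Section Defs.
Variables (T O : finType).
Notation hyp := {ffun T -> O}.

Definition subregion_of (H : {set hyp}) (R : {set {set hyp}}) (h : hyp)
  : {set hyp} :=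
  [set h' in H | [forall r in R, (h \in r) == (h' \in r)]].

Definition subregions (H : {set hyp}) (R : {set {set hyp}}) : {set {set hyp}} :=
  [set subregion_of H R h | h in H].

Definition hyperedge_size (H : {set hyp}) (R : {set {set hyp}}) : nat :=
  minn (\max_(h in H) #|[set r in R | h \in r]|)
       (\max_(r in R) #|[set g in subregions H R | g \subset r]|) + 1.

(* multisets of subregions: multiplicity functions; g \in e iff 0 < e g *)
Definition mset_subr := {ffun {set hyp} -> nat}.

Definition is_hyperedge (H : {set hyp}) (R : {set {set hyp}}) (e : mset_subr)
  : Prop :=
  [/\ forall g, 0 < e g -> g \in subregions H R,
      \sum_g e g = hyperedge_size H R
    & ~ (exists2 r, r \in R & forall g, 0 < e g -> g \subset r)].

Definition version_space (H : {set hyp}) (S : {set T * O}) : {set hyp} :=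
  [set h in H | [forall p in S, h p.1 == p.2]].

Definition in_E_of (H : {set hyp}) (R : {set {set hyp}}) (S : {set T * O})
  (e : mset_subr) : Prop :=
  is_hyperedge H R e /\
  (forall g, 0 < e g -> exists2 h, h \in version_space H S & h \in g).

End Defs.

From mathcomp Require Import all_boot.
Set Implicit Arguments. Unset Strict Implicit. Unset Printing Implicit Defensive.

(* If no region contains V(S), take an inclusion-minimal family F of
   subregions meeting V(S) that no region covers.  Dropping any g from F
   leaves a family covered by some region f(g); for g <> g' in F, f g <> f g'
   (otherwise f g would cover all of F), and every f g with g <> g0 contains
   g0.  Hence |F| - 1 is at most the number of regions containing a
   hypothesis of g0, and also at most the number of subregions inside f g0,
   i.e. |F| <= k.  Padding F with copies of g0 yields a hyperedge of size k
   in E(S).  Conversely, a subregion meeting V(S) lies in every region that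
   contains V(S), so a hyperedge of E(S) would be covered by such a region. *)

Section PadMultiset.
Variable I : finType.

Definition pad_mset (F : {set I}) (i0 : I) (k : nat) : {ffun I -> nat} :=
  [ffun i => (i \in F) + (i == i0) * (k - #|F|)].

Variables (F : {set I}) (i0 : I) (k : nat).
Hypothesis i0F : i0 \in F.

Lemma pad_mset_gt0 i : (0 < pad_mset F i0 k i) = (i \in F).
Proof.
rewrite ffunE; case: (boolP (i \in F)) => //= iF.
by case: eqVneq iF => // ->; rewrite i0F.
Qed.

Lemma sum_pad_mset : #|F| <= k -> \sum_i pad_mset F i0 k i = k.
Proof.
move=> Fk; under eq_bigr do rewrite ffunE; rewrite big_split /=.
have -> : \sum_i (i \in F : nat) = #|F|.
  by rewrite -sum1_card [RHS]big_mkcond; apply: eq_bigr => i _; case: (i \in F).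
rewrite (bigD1 i0) //= eqxx mul1n big1 ?addn0 ?subnKC //.
by move=> i /negbTE ->.
Qed.

End PadMultiset.

Section MinimalUncovered.
Variables (I J : finType) (cov : I -> J -> bool) (R : {set J}).

Definition covered (F : {set I}) := [exists r in R, [forall i in F, cov i r]].

Definition minimal_uncovered (F : {set I}) :=
  ~~ covered F && [forall i in F, covered (F :\ i)].

Lemma covered0 : R != set0 -> covered set0.
Proof.
case/set0Pn=> r rR; apply/exists_inP; exists r => //.
by apply/forall_inP=> i; rewrite inE.
Qed.

Lemma minimal_uncovered_exists F0 : ~~ covered F0 ->
  exists2 F : {set I}, F \subset F0 & minimal_uncovered F.
Proof.
move=> unF0; pose P (F : {set I}) := (F \subset F0) && ~~ covered F.
have PF0 : P F0 by rewrite /P subxx.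
have [F /andP[FF0 unF] Fmin] := arg_minnP (fun F : {set I} => #|F|) PF0.
exists F => //; rewrite /minimal_uncovered unF; apply/forall_inP=> i iF.
apply: contraT => unFi; have := Fmin (F :\ i).
rewrite /P unFi (subset_trans (subsetDl F _) FF0) (cardsD1 i F) iF.
by rewrite ltnn => /(_ isT).
Qed.

Variable F : {set I}.
Hypothesis minF : minimal_uncovered F.

Lemma minimal_uncovered_neq0 : R != set0 -> F != set0.
Proof.
move=> R0; apply: contraNneq (andP minF).1 => ->; exact: covered0.
Qed.

Lemma minimal_uncovered_card i0 : i0 \in F ->
  #|F| <= #|[set r in R | cov i0 r]|.+1.
Proof.
move=> i0F; case/andP: minF => unF /forall_inP coverD1.
have [r0 _ _] := exists_inP (coverD1 i0 i0F).
pose f i := odflt r0 [pick r in R | [forall j in F :\ i, cov j r]].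
have fP i : i \in F -> f i \in R /\ forall j, j \in F :\ i -> cov j (f i).
  move=> iF; rewrite /f; case: pickP => [r /andP[rR /forall_inP] //|none].
  by have /exists_inP[r rR Fr] := coverD1 i iF; move: (none r); rewrite rR Fr.
have f_inj : {in F :\ i0 &, injective f}.
  move=> i j /setD1P[_ iF] /setD1P[_ jF] fij; apply: contraNeq unF => ij.
  apply/exists_inP; exists (f i); first exact: (fP i iF).1.
  apply/forall_inP=> x xF; case: (eqVneq x i) => [->|xi].
    by rewrite fij; apply: (fP j jF).2; rewrite !inE ij iF.
  by apply: (fP i iF).2; rewrite !inE xi xF.
rewrite (cardsD1 i0 F) i0F ltnS -(card_in_imset f_inj).
apply/subset_leq_card/subsetP=> _ /imsetP[i /setD1P[ii0 iF] ->].
by rewrite inE (fP i iF).1 (fP i iF).2 // !inE eq_sym ii0.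
Qed.

End MinimalUncovered.

Section Subregions.
Variables (T O : finType) (H : {set {ffun T -> O}}).
Variable R : {set {set {ffun T -> O}}}.
Local Notation sub := (subregion_of H R).

Lemma subregion_of_self h : h \in H -> h \in sub h.
Proof. by move=> hH; rewrite inE hH; apply/forall_inP. Qed.

Lemma mem_region_subregion h x r : x \in sub h -> r \in R ->
  (x \in r) = (h \in r).
Proof. by rewrite inE => /andP[_ /forall_inP xh] /xh/eqP. Qed.

Lemma subregion_sub_region h x r : h \in H -> x \in sub h -> r \in R ->
  (sub h \subset r) = (x \in r).
Proof.
move=> hH xh rR; rewrite (mem_region_subregion xh rR); apply/idP/idP.
  by move/subsetP; apply; apply: subregion_of_self.
by move=> hr; apply/subsetP=> y yh; rewrite (mem_region_subregion yh rR).
Qed.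

Lemma subregion_of_sub_region h r : h \in H -> r \in R ->
  (sub h \subset r) = (h \in r).
Proof. by move=> hH; apply/subregion_sub_region/subregion_of_self. Qed.

Variable V : {set {ffun T -> O}}.
Hypothesis VH : V \subset H.
Local Notation subV := [set sub h | h in V].

Lemma subregions_of_sub : subV \subset subregions H R.
Proof. exact: imsetS. Qed.

Lemma covered_subregions_of :
  covered (fun g r : {set _} => g \subset r) R subV =
  [exists r in R, V \subset r].
Proof.
apply/exists_inP/exists_inP=> -[r rR Vr]; exists r => //.
  apply/subsetP=> h hV; have hH := subsetP VH h hV.
  by rewrite -(subregion_of_sub_region hH rR) (forall_inP Vr) ?imset_f.
apply/forall_inP=> _ /imsetP[h hV ->].
by rewrite (subregion_of_sub_region (subsetP VH h hV) rR) (subsetP Vr).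
Qed.

Lemma minimal_uncovered_card_le_hyperedge_size
    (F : {set {set {ffun T -> O}}}) g0 :
  F \subset subV -> minimal_uncovered (fun g r : {set _} => g \subset r) R F ->
  g0 \in F -> #|F| <= hyperedge_size H R.
Proof.
move=> FV minF g0F; rewrite /hyperedge_size addn1.
have [h0 h0V g0E] := imsetP (subsetP FV g0 g0F).
have h0H := subsetP VH h0 h0V.
have FG : F \subset subregions H R := subset_trans FV subregions_of_sub.
have := minimal_uncovered_card minF g0F.
rewrite (cardsD1 g0 F) g0F !add1n !ltnS leq_min => F_le_regions.
apply/andP; split.
- apply: leq_trans F_le_regions (leq_trans _ (leq_bigmax_cond _ h0H)).
  apply/subset_leq_card/subsetP=> r; rewrite !inE g0E => /andP[rR].
  by rewrite (subregion_of_sub_region h0H rR) rR.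
- have /exists_inP[r rR /forall_inP Fr] := forall_inP (andP minF).2 g0 g0F.
  apply: leq_trans (leq_bigmax_cond _ rR); apply/subset_leq_card/subsetP=> g gF.
  by rewrite inE (subsetP FG) ?Fr //; case/setD1P: gF.
Qed.

End Subregions.

Section SplittingHypergraph.
Variables (T O : finType) (H : {set {ffun T -> O}}).
Variables (R : {set {set {ffun T -> O}}}) (S : {set T * O}).
Local Notation V := (version_space H S).

Lemma version_space_sub : V \subset H.
Proof. by apply/subsetP=> h; rewrite inE => /andP[]. Qed.

Lemma in_E_of_uncovered e r :
  in_E_of H R S e -> r \in R -> ~~ (V \subset r).
Proof.
move=> [[eG _ e_unc] e_meet] rR; apply/negP=> Vr; apply: e_unc.
exists r => // g eg; have [x xV xg] := e_meet g eg.
have [h hH gE] := imsetP (eG g eg); rewrite gE in xg *.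
by rewrite (subregion_sub_region hH xg rR) (subsetP Vr).
Qed.

Lemma in_E_of_pad_mset (F : {set {set {ffun T -> O}}}) g0 :
  F \subset [set subregion_of H R h | h in V] ->
  minimal_uncovered (fun g r : {set _} => g \subset r) R F -> g0 \in F ->
  in_E_of H R S (pad_mset F g0 (hyperedge_size H R)).
Proof.
move=> FV minF g0F; have VH := version_space_sub.
split; first split.
- move=> g; rewrite pad_mset_gt0 // => gF.
  exact: (subsetP (subregions_of_sub R VH)) (subsetP FV g gF).
- have := minimal_uncovered_card_le_hyperedge_size VH FV minF g0F.
  exact: sum_pad_mset.
- case=> r rR Fr; case/andP: minF => /exists_inP[]; exists r => //.
  by apply/forall_inP=> g gF; apply: Fr; rewrite pad_mset_gt0.
- move=> g; rewrite pad_mset_gt0 // => /(subsetP FV)/imsetP[h hV ->].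
  by exists h; last exact/subregion_of_self/(subsetP VH).
Qed.

End SplittingHypergraph.

Theorem theorem1 (T O : finType) (H : {set {ffun T -> O}})
    (R : {set {set {ffun T -> O}}})
    (HR_sub : forall r, r \in R -> r \subset H)
    (HR_ne : R != set0)
    (HR_cover : \bigcup_(r in R) r = H)
    (S : {set T * O}) :
  (forall e, ~ in_E_of H R S e) <->
  (exists2 r, r \in R & version_space H S \subset r).
Proof.
split=> [noE|[r rR Vr] e /in_E_of_uncovered/(_ rR)]; last by rewrite Vr.
apply/exists_inP; rewrite -(covered_subregions_of R (version_space_sub H S)).
apply: contraT => unV.
have [F FV minF] := minimal_uncovered_exists unV.
have /set0Pn[g0 g0F] := minimal_uncovered_neq0 minF HR_ne.
by case: (noE _ (in_E_of_pad_mset FV minF g0F)).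
Qed.
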